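(* In the setting below with $P=\mathfrak A$, the worst case setting and the absolute error criterion, suppose $\lambda_1<1$. Then the following are equivalent: (a) $\{S_d\}$ is strongly polynomially tractable; (b) $\{S_d\}$ is polynomially tractable; (c) there exists $\tau\in(0,\infty)$ with $\lambda\in\ell_\tau$. The same equivalences hold if $\lambda_1\ge1$ and $\#I_d$ grows linearly with $d$, i.e. there is $c>0$ with $\#I_d\ge c\,d$ for all sufficiently large $d$.
   Context: Setting: $S_1:H_1\to G_1$ is a compact linear operator between real Hilbert spaces ($H_1$ infinite-dimensional separable); $\lambda=(\lambda_m)_{m\in\mathbb N}$, $\lambda_1\ge\lambda_2\ge\dots\ge0$, are the eigenvalues of $S_1^\dagger S_1$. $S_d=S_1^{\otimes d}:H_1^{\otimes d}\to G_1^{\otimes d}$. For each $d$ fix $\emptyset\ne I_d=\{i_1<\dots<i_{a_d}\}\subset\{1,\dots,d\}$ ($I_1=\{1\}$), put $a_d=\#I_d$, $b_d=d-a_d$, and fix one type $P\in\{\mathfrak S,\mathfrak A\}$ for all $d$; the problem $\{S_d\}$ is the family of restrictions of $S_d$ to the $I_d$-symmetric subspace (if $P=\mathfrak S$) or $I_d$-antisymmetric subspace (if $P=\mathfrak A$) of $H_1^{\otimes d}$, i.e. the range of $\frac1{a_d!}\sum_{\pi}(\pm1)U_\pi$, the sum over permutations $\pi$ of $\{1,\dots,d\}$ fixing all points outside $I_d$, $U_\pi(f_1\otimes\cdots\otimes f_d)=f_{\pi(1)}\otimes\cdots\otimes f_{\pi(d)}$, sign $(-1)^{|\pi|}$ used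 for $\mathfrak A$. Let $\nabla_d=\{k\in\mathbb N^d:k_{i_1}\le\dots\le k_{i_{a_d}}\}$ for $P=\mathfrak S$ and with strict inequalities for $P=\mathfrak A$; $\lambda_{d,k}=\prod_{l=1}^d\lambda_{k_l}$; $\psi:\mathbb N\to\nabla_d$ a bijection with $\lambda_{d,\psi(1)}\ge\lambda_{d,\psi(2)}\ge\cdots$. These are exactly the eigenvalues of $S_d^\dagger S_d$ on the subspace, and the information complexity (absolute error) is $n(\epsilon,d)=\#\{k\in\nabla_d:\lambda_{d,k}>\epsilon^2\}$, the initial error $\epsilon^{\rm init}_d=\sqrt{\lambda_{d,\psi(1)}}$ (equal to $\lambda_1^{d/2}$ if $P=\mathfrak S$, and $\sqrt{\lambda_1^{b_d}\lambda_1\lambda_2\cdots\lambda_{a_d}}$ if $P=\mathfrak A$). Polynomially tractable: $\exists C,p>0,q\ge0$ with $n(\epsilon,d)\le C\epsilon^{-p}d^q$ for all $d\in\mathbb N,\epsilon\in(0,1]$; strongly polynomially tractable: this with $q=0$. Standing assumptions: $\lambda_2>0$ and $\epsilon_d^{\rm init}>0$ for all $d$. $\ell_\tau$: sequences with $\|\lambda\|_{\ell_\tau}^\tau=\sum_m\lambda_m^\tau<\infty$. *)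

From Stdlib Require Import Reals Lra Lia List.
Import ListNotations.
Open Scope R_scope.

(* Eigenvalue sequence lam : nat -> R, used 1-based: lam 1 >= lam 2 >= ... >= 0.
   (lam 0 is irrelevant.)  *)

(* nonnegative, nonincreasing, tending to 0 (compactness of S_1) *)
Definition eigen_seq (lam : nat -> R) : Prop :=
  (forall m, (1 <= m)%nat -> 0 <= lam m) /\
  (forall m, (1 <= m)%nat -> lam (S m) <= lam m) /\
  (forall e, 0 < e -> exists M, forall m, (M <= m)%nat -> lam m < e).

(* Index sets: I d j = true  means  j \in I_d ; required I_d a nonempty subset
   of {1,...,d}, and I_1 = {1}. *)
Definition index_family (I : nat -> nat -> bool) : Prop :=
  (forall d j, I d j = true -> (1 <= j <= d)%nat) /\
  (forall d, (1 <= d)%nat -> exists j, I d j = true) /\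
  I 1%nat 1%nat = true.

Definition card_I (I : nat -> nat -> bool) (d : nat) : nat :=
  length (filter (I d) (seq 1 d)).

(* Multi-indices k in N^d are lists of length d with entries >= 1;
   k_l is  nth (l-1) k 0. *)
(* nabla_d for P = antisymmetric: strictly increasing along I_d. *)
Definition nablaA (I : nat -> nat -> bool) (d : nat) (k : list nat) : Prop :=
  length k = d /\
  (forall m, In m k -> (1 <= m)%nat) /\
  (forall i j, (1 <= i)%nat -> (i < j)%nat -> (j <= d)%nat ->
     I d i = true -> I d j = true ->
     (nth (i - 1) k 0 < nth (j - 1) k 0)%nat).

Definition lam_prod (lam : nat -> R) (k : list nat) : R :=
  fold_right (fun m acc => lam m * acc) 1 k.

(* Standing assumption: initial error eps_d^init = sqrt(max_k lambda_{d,k}) > 0,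
   i.e. some k in nabla_d has lambda_{d,k} > 0. *)
Definition init_error_pos (lam : nat -> R) (I : nat -> nat -> bool) : Prop :=
  forall d, (1 <= d)%nat -> exists k, nablaA I d k /\ 0 < lam_prod lam k.

(* "n(eps,d) <= N" : every finite set (duplicate-free list) of k in nabla_d
   with lambda_{d,k} > eps^2 has at most N elements. *)
Definition n_le (lam : nat -> R) (I : nat -> nat -> bool) (eps : R) (d : nat)
  (N : R) : Prop :=
  forall l : list (list nat), NoDup l ->
    (forall k, In k l -> nablaA I d k /\ lam_prod lam k > eps ^ 2) ->
    INR (length l) <= N.

Definition poly_tractable (lam : nat -> R) (I : nat -> nat -> bool) : Prop :=
  exists C p q, 0 < C /\ 0 < p /\ 0 <= q /\
    forall d eps, (1 <= d)%nat -> 0 < eps <= 1 ->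
      n_le lam I eps d (C * Rpower eps (- p) * Rpower (INR d) q).

Definition strongly_poly_tractable (lam : nat -> R) (I : nat -> nat -> bool) : Prop :=
  exists C p, 0 < C /\ 0 < p /\
    forall d eps, (1 <= d)%nat -> 0 < eps <= 1 ->
      n_le lam I eps d (C * Rpower eps (- p)).

(* x^t for x >= 0, t > 0, with 0^t = 0 (Stdlib's Rpower 0 t is 1). *)
Definition rpow_nn (x t : R) : R :=
  if Rle_dec x 0 then 0 else Rpower x t.

Definition in_ell (lam : nat -> R) (tau : R) : Prop :=
  exists s, infinite_sum (fun m => rpow_nn (lam (S m)) tau) s.

From Stdlib Require Import Reals Lra Lia List.
Import ListNotations.
Open Scope R_scope.

(* Strong tractability trivially implies tractability, and tractability in
   dimension d = 1 alone already forces summability: the singletons [1..m]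
   show that n(eps,1) >= m whenever lam m > eps^2, so lam_m^p = O(1/m^2) and
   lam lies in l_p.  The converse "summable => strongly tractable" is where the
   hypotheses enter, through one property, exponential decay
   (exp_decay): every lam_{d,k} with k in nabla_d is at most rho^d (rho < 1)
   for large d.  Given lam in l_tau and an integer n >= tau, counting by the
   n-th moment bounds n(eps,d) by S^d / eps^(2n) with S = sum_m lam_m^n, and
   exponential decay makes n(eps,d) = 0 unless d = O(log(1/eps)), so that
   S^d <= S^d1 * eps^(-q).  Exponential decay holds with rho = lam 1 when
   lam 1 < 1, and when #I_d >= c d since the strictly increasing entries of k
   on I_d are then mostly large, hence their eigenvalues small. *)

Definition sumL {A : Type} (f : A -> R) (l : list A) : R :=
  fold_right (fun x acc => f x + acc) 0 l.

Lemma sumL_app {A : Type} (f : A -> R) (l1 l2 : list A) :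
  sumL f (l1 ++ l2) = sumL f l1 + sumL f l2.
Proof. induction l1 as [|x l1 IH]; simpl; [lra|]. rewrite IH; lra. Qed.

Lemma sumL_nonneg {A : Type} (f : A -> R) (l : list A) :
  (forall x, In x l -> 0 <= f x) -> 0 <= sumL f l.
Proof.
  induction l as [|x l IH]; intros Hf; simpl; [lra|].
  assert (0 <= f x) by (apply Hf; left; reflexivity).
  assert (0 <= sumL f l) by (apply IH; intros y Hy; apply Hf; right; exact Hy).
  lra.
Qed.

Lemma sumL_scal_r {A : Type} (f : A -> R) (c : R) (l : list A) :
  sumL (fun x => f x * c) l = sumL f l * c.
Proof. induction l as [|x l IH]; simpl; [lra|]. rewrite IH; lra. Qed.

Lemma sumL_flat_map {A B : Type} (f : B -> R) (g : A -> list B) (l : list A) :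
  sumL f (flat_map g l) = sumL (fun a => sumL f (g a)) l.
Proof. induction l as [|a l IH]; simpl; [lra|]. rewrite sumL_app, IH; lra. Qed.

Lemma sumL_lower_bound {A : Type} (f : A -> R) (c : R) (l : list A) :
  (forall x, In x l -> c <= f x) -> INR (length l) * c <= sumL f l.
Proof.
  induction l as [|x l IH]; intros Hf; [simpl; lra|].
  cbn [length sumL fold_right]; rewrite S_INR.
  assert (c <= f x) by (apply Hf; left; reflexivity).
  assert (INR (length l) * c <= sumL f l)
    by (apply IH; intros y Hy; apply Hf; right; exact Hy).
  unfold sumL in *; lra.
Qed.

Lemma sumL_incl {A : Type} (f : A -> R) (l L : list A) :
  (forall x, In x L -> 0 <= f x) -> NoDup l -> incl l L -> sumL f l <= sumL f L.
Proof.
  revert L; induction l as [|a l IH]; intros L Hf Hnd Hincl.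
  - apply sumL_nonneg; exact Hf.
  - inversion Hnd as [|? ? Ha Hnd']; subst.
    destruct (in_split a L (Hincl a (or_introl eq_refl))) as [L1 [L2 ->]].
    assert (Hrest : sumL f l <= sumL f (L1 ++ L2)).
    { apply IH; [|exact Hnd'|].
      - intros x Hx; apply Hf, in_or_app.
        destruct (in_app_or _ _ _ Hx); [left | right; right]; assumption.
      - intros x Hx.
        destruct (in_app_or _ _ _ (Hincl x (or_intror Hx))) as [H|[H|H]].
        + apply in_or_app; left; exact H.
        + subst; contradiction.
        + apply in_or_app; right; exact H. }
    rewrite sumL_app in *; simpl; lra.
Qed.

Lemma sumL_seq_partial_sum (g : nat -> R) (n : nat) :
  sumL g (seq 1 (S n)) = sum_f_R0 (fun j => g (S j)) n.
Proof.
  induction n as [|n IH]; [simpl; lra|].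
  rewrite seq_S, sumL_app, IH, tech5; simpl; lra.
Qed.

Lemma sumL_seq_eventual_le (f g : nat -> R) (M : nat) :
  (forall m, (1 <= m)%nat -> 0 <= f m) -> (forall m, 0 <= g m) ->
  (forall m, (M <= m)%nat -> f m <= g m) ->
  forall B, sumL f (seq 1 B) <= sumL f (seq 1 M) + sumL g (seq 1 B).
Proof.
  intros Hf Hg Hfg B.
  assert (Hpos : forall a n, 0 <= sumL f (seq (S a) n)).
  { intros a n; apply sumL_nonneg; intros m Hm; apply Hf; apply in_seq in Hm; lia. }
  induction B as [|B IH].
  - specialize (Hpos O M); simpl; lra.
  - assert (0 <= sumL g (seq 1 (S B))) by (apply sumL_nonneg; auto).
    destruct (Compare_dec.le_lt_dec M (S B)) as [Hle|Hlt].
    + rewrite !seq_S, !sumL_app; cbn [sumL fold_right plus].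
      specialize (Hfg (S B) Hle); lra.
    + replace M with (S B + (M - S B))%nat by lia.
      rewrite seq_app, sumL_app; change (1 + S B)%nat with (S (S B)).
      specialize (Hpos (S B) (M - S B)%nat); lra.
Qed.

(** Multi-indices and the box counting bound. *)

Definition multi_index (d : nat) (k : list nat) : Prop :=
  length k = d /\ forall m, In m k -> (1 <= m)%nat.

Lemma nablaA_multi_index (I : nat -> nat -> bool) (d : nat) (k : list nat) :
  nablaA I d k -> multi_index d k.
Proof. intros [Hlen [Hpos _]]; split; assumption. Qed.

Fixpoint box (B d : nat) : list (list nat) :=
  match d with
  | O => [[]]
  | S d => flat_map (fun m => map (cons m) (box B d)) (seq 1 B)
  end.

Lemma box_complete (B d : nat) (k : list nat) :
  multi_index d k -> (forall m, In m k -> (m <= B)%nat) -> In k (box B d).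
Proof.
  revert k; induction d as [|d IH]; intros [|m k] [Hlen Hpos] Hle; simpl in *;
    try discriminate; [left; reflexivity|].
  apply in_flat_map; exists m; split.
  - apply in_seq; specialize (Hpos m (or_introl eq_refl));
      specialize (Hle m (or_introl eq_refl)); lia.
  - apply in_map, IH; [split; [lia|]|]; intros x Hx;
      [apply Hpos | apply Hle]; right; exact Hx.
Qed.

Lemma box_entries_pos (B d : nat) (k : list nat) :
  In k (box B d) -> forall m, In m k -> (1 <= m)%nat.
Proof.
  revert k; induction d as [|d IH]; simpl; intros k Hk m Hm.
  - destruct Hk as [<-|[]]; destruct Hm.
  - apply in_flat_map in Hk as [a [Ha Hk]]; apply in_map_iff in Hk as [k' [<- Hk']].
    destruct Hm as [<-|Hm]; [apply in_seq in Ha; lia | exact (IH k' Hk' m Hm)].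
Qed.

Lemma sumL_map_cons (mu : nat -> R) (m : nat) (X : list (list nat)) :
  sumL (lam_prod mu) (map (cons m) X) = mu m * sumL (lam_prod mu) X.
Proof.
  induction X as [|k X IH]; simpl; [lra|].
  rewrite IH; unfold lam_prod; simpl; ring.
Qed.

Lemma sumL_box (mu : nat -> R) (B d : nat) :
  sumL (lam_prod mu) (box B d) = (sumL mu (seq 1 B)) ^ d.
Proof.
  induction d as [|d IH]; simpl; [unfold lam_prod; simpl; lra|].
  rewrite sumL_flat_map, <- IH, <- sumL_scal_r; clear IH.
  induction (seq 1 B) as [|m s IHs]; simpl; [reflexivity|].
  rewrite IHs, sumL_map_cons; reflexivity.
Qed.

Lemma entries_bounded (l : list (list nat)) :
  exists B, forall k, In k l -> forall m, In m k -> (m <= B)%nat.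
Proof.
  induction l as [|k l [B HB]]; [exists O; simpl; tauto|].
  exists (Nat.max (list_max k) B); intros k' [<-|Hk'] m Hm.
  - assert (Hmax : Forall (fun x => (x <= list_max k)%nat) k)
      by (apply list_max_le; lia).
    rewrite Forall_forall in Hmax; specialize (Hmax m Hm); lia.
  - specialize (HB k' Hk' m Hm); lia.
Qed.

Lemma lam_prod_nonneg (mu : nat -> R) (k : list nat) :
  (forall m, In m k -> 0 <= mu m) -> 0 <= lam_prod mu k.
Proof.
  induction k as [|m k IH]; intros H; unfold lam_prod; simpl; [lra|].
  apply Rmult_le_pos; [apply H; left; reflexivity|].
  apply IH; intros x Hx; apply H; right; exact Hx.
Qed.

Lemma lam_prod_pow (mu : nat -> R) (n : nat) (k : list nat) :
  lam_prod (fun m => mu m ^ n) k = lam_prod mu k ^ n.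
Proof.
  induction k as [|m k IH]; unfold lam_prod in *; simpl; [rewrite pow1; reflexivity|].
  rewrite IH, Rpow_mult_distr; reflexivity.
Qed.

Lemma sum_lam_prod_le (mu : nat -> R) (S : R) (d : nat) (l : list (list nat)) :
  (forall m, (1 <= m)%nat -> 0 <= mu m) -> (forall B, sumL mu (seq 1 B) <= S) ->
  NoDup l -> (forall k, In k l -> multi_index d k) ->
  sumL (lam_prod mu) l <= S ^ d.
Proof.
  intros Hmu HS Hnd Hl; destruct (entries_bounded l) as [B HB].
  apply Rle_trans with (sumL (lam_prod mu) (box B d)).
  - apply sumL_incl; [|exact Hnd|].
    + intros k Hk; apply lam_prod_nonneg; intros m Hm;
        apply Hmu, (box_entries_pos B d k Hk m Hm).
    + intros k Hk; apply box_complete; [apply Hl | apply HB]; exact Hk.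
  - rewrite sumL_box; apply pow_incr; split; [|apply HS].
    apply sumL_nonneg; intros m Hm; apply Hmu; apply in_seq in Hm; lia.
Qed.

Lemma count_by_moment (lam : nat -> R) (n : nat) (S eps : R) (d : nat)
  (l : list (list nat)) :
  (forall m, (1 <= m)%nat -> 0 <= lam m) ->
  (forall B, sumL (fun m => lam m ^ n) (seq 1 B) <= S) -> 0 <= eps -> NoDup l ->
  (forall k, In k l -> multi_index d k /\ lam_prod lam k > eps ^ 2) ->
  INR (length l) * (eps ^ 2) ^ n <= S ^ d.
Proof.
  intros Hlam HS Heps Hnd Hl.
  apply Rle_trans with (sumL (lam_prod (fun m => lam m ^ n)) l).
  - apply sumL_lower_bound; intros k Hk; rewrite lam_prod_pow.
    destruct (Hl k Hk) as [_ Hgt]; apply pow_incr; split; [apply pow_le|]; lra.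
  - apply sum_lam_prod_le; [|exact HS|exact Hnd|].
    + intros m Hm; apply pow_le, Hlam, Hm.
    + intros k Hk; apply Hl, Hk.
Qed.

(** Polynomial tractability forces summability of a power of the eigenvalues. *)

Lemma eigen_antitone (lam : nat -> R) :
  eigen_seq lam -> forall j m, (1 <= j <= m)%nat -> lam m <= lam j.
Proof.
  intros [_ [Hdec _]] j m Hjm; induction m as [|m IH]; [lia|].
  destruct (Nat.eq_dec j (S m)) as [->|Hne]; [lra|].
  specialize (Hdec m ltac:(lia)); specialize (IH ltac:(lia)); lra.
Qed.

Lemma count_first_eigenvalues (lam : nat -> R) (I : nat -> nat -> bool)
  (eps N : R) (m : nat) :
  eigen_seq lam -> (1 <= m)%nat -> eps ^ 2 < lam m -> n_le lam I eps 1 N ->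
  INR m <= N.
Proof.
  intros Hlam Hm Heps Hn.
  rewrite <- (length_seq m 1), <- (length_map (fun j => [j])).
  apply Hn.
  - apply NoDup_map_NoDup_ForallPairs; [|apply seq_NoDup].
    intros a b _ _ Hab; injection Hab; auto.
  - intros k Hk; apply in_map_iff in Hk as [j [<- Hj]]; apply in_seq in Hj.
    split; [split; [reflexivity | split]|].
    + intros x [<-|[]]; lia.
    + intros; lia.
    + unfold lam_prod; simpl; rewrite Rmult_1_r.
      pose proof (eigen_antitone lam Hlam j m ltac:(lia)); lra.
Qed.

Lemma rpower_bound_from_count (x C p m : R) :
  0 < x -> 0 < m -> m <= C * Rpower (sqrt (x / 2)) (- p) ->
  Rpower x p <= Rpower 2 p * C ^ 2 * / m ^ 2.
Proof.
  intros Hx Hm Hcount.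
  set (y := Rpower (x / 2) (p / 2)).
  assert (Hy : 0 < y) by (unfold y, Rpower; apply exp_pos).
  assert (Heps : Rpower (sqrt (x / 2)) (- p) = / y).
  { rewrite Rpower_Ropp, <- Rpower_sqrt, Rpower_mult by lra.
    unfold y; do 2 f_equal; field. }
  assert (Hx2 : Rpower x p = Rpower 2 p * y ^ 2).
  { replace x with (2 * (x / 2)) at 1 by field.
    rewrite <- Rpower_mult_distr by lra; f_equal.
    unfold y; rewrite <- Rpower_pow, Rpower_mult by (unfold Rpower; apply exp_pos).
    f_equal; simpl; field. }
  assert (Hym : y <= C * / m).
  { rewrite Heps in Hcount; apply (Rmult_le_reg_r m); [exact Hm|].
    apply (Rmult_le_reg_l (/ y)); [apply Rinv_0_lt_compat, Hy|].
    replace (/ y * (C * / m * m)) with (C * / y) by (field; lra).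
    replace (/ y * (y * m)) with m by (field; lra); exact Hcount. }
  rewrite Hx2, Rmult_assoc; apply Rmult_le_compat_l; [unfold Rpower; left; apply exp_pos|].
  replace (C ^ 2 * / m ^ 2) with ((C * / m) ^ 2) by (field; lra).
  apply pow_incr; lra.
Qed.

(* Telescoping bound for sum 1/j^2 <= 2. *)
Lemma sum_inv_sq_bound (n : nat) :
  sum_f_R0 (fun j => / INR (S j) ^ 2) n <= 2 - 2 / (INR n + 2).
Proof.
  induction n as [|n IH]; [simpl; lra|].
  rewrite tech5; rewrite !S_INR in *; set (x := INR n) in *.
  assert (0 <= x) by apply pos_INR.
  assert (E : 2 / (x + 2) - 2 / (x + 1 + 2) = / ((x + 2) * (x + 3) / 2))
    by (field; lra).
  assert (/ (x + 1 + 1) ^ 2 <= / ((x + 2) * (x + 3) / 2))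
    by (apply Rinv_le_contravar; nra).
  lra.
Qed.

Lemma term_le_partial_sum (a : nat -> R) (j n : nat) :
  (forall i, 0 <= a i) -> (j <= n)%nat -> a j <= sum_f_R0 a n.
Proof.
  intros Ha Hjn; induction n as [|n IH].
  - replace j with O by lia; simpl; lra.
  - rewrite tech5; destruct (Nat.eq_dec j (S n)) as [->|Hne].
    + pose proof (cond_pos_sum a n Ha); lra.
    + specialize (IH ltac:(lia)); specialize (Ha (S n)); lra.
Qed.

Lemma summable_of_inv_sq_bound (t : nat -> R) (D : R) (M : nat) :
  (forall j, 0 <= t j) -> (forall j, (M <= j)%nat -> t j <= D * / INR (S j) ^ 2) ->
  exists s, infinite_sum t s.
Proof.
  intros Ht Hb.
  assert (Hw : forall j, 0 < / INR (S j) ^ 2)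
    by (intros j; apply Rinv_0_lt_compat, pow_lt, lt_0_INR; lia).
  set (D' := Rmax D (sum_f_R0 (fun j => t j * INR (S j) ^ 2) M)).
  assert (HD' : forall j, t j <= D' * / INR (S j) ^ 2).
  { intros j; specialize (Hw j).
    destruct (Compare_dec.le_lt_dec M j) as [Hle|Hlt].
    - apply Rle_trans with (D * / INR (S j) ^ 2); [apply Hb, Hle|].
      apply Rmult_le_compat_r; [lra | apply Rmax_l].
    - apply Rle_trans with ((t j * INR (S j) ^ 2) * / INR (S j) ^ 2);
        [right; field; apply not_0_INR; lia|].
      apply Rmult_le_compat_r; [lra|]; eapply Rle_trans; [|apply Rmax_r].
      apply (term_le_partial_sum (fun j => t j * INR (S j) ^ 2) j M); [|lia].
      intros i; apply Rmult_le_pos; [apply Ht | apply pow_le, pos_INR]. }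
  assert (HD0 : 0 <= D') by (specialize (HD' O); specialize (Ht O); specialize (Hw O); nra).
  assert (Hgrow : Un_growing (sum_f_R0 t))
    by (intros n; rewrite tech5; specialize (Ht (S n)); lra).
  assert (Hub : has_ub (sum_f_R0 t)).
  { exists (2 * D'); intros y [n ->].
    assert (sum_f_R0 t n <= D' * sum_f_R0 (fun j => / INR (S j) ^ 2) n).
    { induction n as [|n IH]; [apply HD'|].
      rewrite !tech5, Rmult_plus_distr_l; specialize (HD' (S n)); lra. }
    pose proof (sum_inv_sq_bound n).
    assert (0 < 2 / (INR n + 2)) by (pose proof (pos_INR n); apply Rdiv_lt_0_compat; lra).
    nra. }
  destruct (growing_cv _ Hgrow Hub) as [s Hs]; exists s; exact Hs.
Qed.

Lemma rpow_nn_nonneg (x t : R) : 0 <= rpow_nn x t.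
Proof.
  unfold rpow_nn; destruct (Rle_dec x 0); [lra|]; unfold Rpower; left; apply exp_pos.
Qed.

(* The bound n(eps,1) <= C eps^(-p) gives lam_m^p = O(1/m^2), hence lam in l_p. *)
Lemma summable_of_d1_bound (lam : nat -> R) (I : nat -> nat -> bool) (C p : R) :
  eigen_seq lam ->
  (forall eps, 0 < eps <= 1 -> n_le lam I eps 1 (C * Rpower eps (- p))) ->
  in_ell lam p.
Proof.
  intros Hlam Hn; destruct (proj2 (proj2 Hlam) 1 ltac:(lra)) as [M HM].
  apply (summable_of_inv_sq_bound _ (Rpower 2 p * C ^ 2) M);
    [intros; apply rpow_nn_nonneg|].
  intros j Hj; unfold rpow_nn; destruct (Rle_dec (lam (S j)) 0) as [Hle|Hgt].
  - apply Rmult_le_pos;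
      [apply Rmult_le_pos; [unfold Rpower; left; apply exp_pos | apply pow2_ge_0]|].
    left; apply Rinv_0_lt_compat, pow_lt, lt_0_INR; lia.
  - apply Rnot_le_lt in Hgt; apply rpower_bound_from_count;
      [exact Hgt | apply lt_0_INR; lia|].
    assert (Hlt1 : lam (S j) < 1) by (apply HM; lia).
    apply (count_first_eigenvalues lam I (sqrt (lam (S j) / 2)) _ (S j) Hlam);
      [lia| |apply Hn].
    + rewrite pow2_sqrt; lra.
    + split; [apply sqrt_lt_R0; lra|].
      rewrite <- sqrt_1; apply sqrt_le_1_alt; lra.
Qed.

(** Exponential decay of the eigenvalue products in the dimension. *)

Definition exp_decay (lam : nat -> R) (I : nat -> nat -> bool) : Prop :=
  exists rho d1, 0 < rho < 1 /\
    forall d k, (d1 <= d)%nat -> nablaA I d k -> lam_prod lam k <= rho ^ d.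

Lemma eigen_range (lam : nat -> R) :
  eigen_seq lam -> forall m, (1 <= m)%nat -> 0 <= lam m <= lam 1%nat.
Proof.
  intros Hlam m Hm; split; [apply (proj1 Hlam), Hm|].
  apply (eigen_antitone lam Hlam); lia.
Qed.

Lemma pow_le_antimono (x : R) (m n : nat) : 0 <= x <= 1 -> (m <= n)%nat -> x ^ n <= x ^ m.
Proof.
  intros Hx Hmn; replace n with (m + (n - m))%nat by lia; rewrite pow_add.
  assert (0 <= x ^ m) by (apply pow_le; lra).
  assert (x ^ (n - m) <= 1) by (rewrite <- (pow1 (n - m)); apply pow_incr; lra).
  assert (0 <= x ^ (n - m)) by (apply pow_le; lra).
  nra.
Qed.

Lemma lam_prod_le_split (lam : nat -> R) (L th : R) (M : nat) (k : list nat) :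
  0 <= th <= 1 -> (forall m, In m k -> 0 <= lam m <= L) ->
  (forall m, In m k -> (M <= m)%nat -> lam m <= L * th) ->
  lam_prod lam k <= L ^ length k * th ^ length (filter (Nat.leb M) k).
Proof.
  intros Hth; induction k as [|m k IH]; intros Hle Hbig; unfold lam_prod in *; simpl; [lra|].
  assert (Hm := Hle m (or_introl eq_refl)).
  assert (Hrest : 0 <= fold_right (fun m acc => lam m * acc) 1 k)
    by (apply (lam_prod_nonneg lam k); intros x Hx; apply Hle; right; exact Hx).
  specialize (IH (fun x Hx => Hle x (or_intror Hx)) (fun x Hx => Hbig x (or_intror Hx))).
  assert (0 <= th ^ length (filter (Nat.leb M) k)) by (apply pow_le; lra).
  destruct (Nat.leb M m) eqn:HMm; simpl.
  - apply Nat.leb_le in HMm; specialize (Hbig m (or_introl eq_refl) HMm).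
    replace (L * L ^ length k * (th * th ^ length (filter (Nat.leb M) k)))
      with ((L * th) * (L ^ length k * th ^ length (filter (Nat.leb M) k))) by ring.
    apply Rmult_le_compat; lra.
  - rewrite Rmult_assoc; apply Rmult_le_compat; lra.
Qed.

Lemma decay_of_small_first (lam : nat -> R) (I : nat -> nat -> bool) :
  eigen_seq lam -> lam 1%nat < 1 -> exp_decay lam I.
Proof.
  intros Hlam H1; exists (Rmax (lam 1%nat) (/ 2)), O; split.
  { split; [apply Rlt_le_trans with (/ 2); [lra | apply Rmax_r]|].
    apply Rmax_lub_lt; lra. }
  intros d k _ [Hlen [Hpos _]]; rewrite <- Hlen.
  assert (Hrange : forall m, In m k -> 0 <= lam m <= lam 1%nat)
    by (intros m Hm; apply eigen_range; [exact Hlam | apply Hpos, Hm]).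
  apply Rle_trans with (lam 1%nat ^ length k).
  - rewrite <- (Rmult_1_r (lam 1%nat ^ length k)), <- (pow1 (length (filter (Nat.leb 0) k))).
    apply (lam_prod_le_split lam _ 1 O); [lra | exact Hrange|].
    intros m Hm _; rewrite Rmult_1_r; apply Hrange, Hm.
  - apply pow_incr; split; [apply (eigen_range lam Hlam 1%nat (le_n 1)) | apply Rmax_l].
Qed.

Lemma count_filter_positions (P : nat -> bool) (k : list nat) :
  length (filter P k) = length (filter (fun u => P (nth u k O)) (seq 0 (length k))).
Proof.
  induction k as [|m k IH]; [reflexivity|]; simpl.
  rewrite <- seq_shift, filter_map_swap.
  destruct (P m); simpl; rewrite length_map, IH; reflexivity.
Qed.

(* In k in nabla_d the entries indexed by I_d are strictly increasing, so at
   most M of them lie below M: at least #I_d - M entries are >= M. *)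
Lemma many_large_entries (I : nat -> nat -> bool) (d : nat) (k : list nat) (M : nat) :
  nablaA I d k -> (card_I I d - M <= length (filter (Nat.leb M) k))%nat.
Proof.
  intros [Hlen [_ Hinc]].
  set (P := fun u => Nat.leb M (nth u k O)).
  set (s := filter (fun u => I d (S u)) (seq 0 d)).
  assert (Hcard : card_I I d = length s).
  { unfold card_I, s; rewrite <- seq_shift, filter_map_swap, length_map; reflexivity. }
  assert (Hnds : NoDup s) by (apply NoDup_filter, seq_NoDup).
  assert (Hlarge : (length (filter P s) <= length (filter P (seq 0 d)))%nat).
  { apply NoDup_incl_length; [apply NoDup_filter, Hnds|].
    intros u Hu; apply filter_In in Hu as [Hu HPu]; apply filter_In; split; [|exact HPu].
    apply filter_In in Hu; apply Hu. }
  assert (Hsmall : (length (filter (fun u => negb (P u)) s) <= M)%nat).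
  { rewrite <- (length_map (fun u => nth u k O)), <- (length_seq M 0).
    apply NoDup_incl_length.
    - apply NoDup_map_NoDup_ForallPairs; [|apply NoDup_filter, Hnds].
      intros u v Hu Hv Huv.
      apply filter_In in Hu as [Hu _]; apply filter_In in Hv as [Hv _].
      apply filter_In in Hu as [Hu Iu]; apply filter_In in Hv as [Hv Iv].
      apply in_seq in Hu; apply in_seq in Hv.
      destruct (Nat.lt_trichotomy u v) as [Hlt|[Heq|Hgt]]; [|exact Heq|].
      + specialize (Hinc (S u) (S v) ltac:(lia) ltac:(lia) ltac:(lia) Iu Iv).
        simpl in Hinc; rewrite !Nat.sub_0_r in Hinc; lia.
      + specialize (Hinc (S v) (S u) ltac:(lia) ltac:(lia) ltac:(lia) Iv Iu).
        simpl in Hinc; rewrite !Nat.sub_0_r in Hinc; lia.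
    - intros x Hx; apply in_map_iff in Hx as [u [<- Hu]].
      apply filter_In in Hu as [_ Hu]; unfold P in Hu.
      apply Bool.negb_true_iff, Nat.leb_gt in Hu; apply in_seq; lia. }
  pose proof (filter_length P s).
  rewrite (count_filter_positions (Nat.leb M) k), Hlen; fold P; lia.
Qed.

(* Arithmetic core of the linear case: a loss factor th^(-M) is absorbed by
   halving the rate, once (1/2)^d < th^M. *)
Lemma absorb_loss (L b th : R) (d a M : nat) :
  0 <= L -> L * b = / 4 -> 0 < th <= 1 -> th ^ a <= b ^ d -> (/ 2) ^ d < th ^ M ->
  L ^ d * th ^ (a - M) <= (/ 2) ^ d.
Proof.
  intros HL HLb Hth Ha Hd.
  assert (HthM : 0 < th ^ M) by (apply pow_lt; lra).
  assert (Hloss : th ^ (a - M) * th ^ M <= b ^ d).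
  { rewrite <- pow_add; apply Rle_trans with (th ^ a); [|exact Ha].
    apply pow_le_antimono; [lra|lia]. }
  assert (Hquarter : L ^ d * b ^ d = (/ 2) ^ d * (/ 2) ^ d)
    by (rewrite <- !Rpow_mult_distr, HLb; f_equal; field).
  assert (0 < (/ 2) ^ d) by (apply pow_lt; lra).
  assert (0 <= L ^ d) by (apply pow_le; lra).
  apply (Rmult_le_reg_r (th ^ M)); [exact HthM|].
  apply Rle_trans with (L ^ d * b ^ d); [rewrite Rmult_assoc; apply Rmult_le_compat_l; lra|].
  rewrite Hquarter; apply Rmult_le_compat_l; lra.
Qed.

(* Second case of the theorem: if #I_d >= c d eventually, then a fixed
   proportion of the entries of any k in nabla_d is large, which forces
   geometric decay whatever the size of lam 1. *)
Lemma decay_of_linear_card (lam : nat -> R) (I : nat -> nat -> bool) :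
  eigen_seq lam ->
  (exists c d0, 0 < c /\ forall d, (d0 <= d)%nat -> c * INR d <= INR (card_I I d)) ->
  exp_decay lam I.
Proof.
  intros Hlam [c [d0 [Hc Hcard]]].
  set (L := Rmax 1 (lam 1%nat)).
  assert (HL : 1 <= L) by apply Rmax_l.
  set (b := / (4 * L)).
  assert (Hb : 0 < b <= 1) by (unfold b; split;
    [apply Rinv_0_lt_compat | rewrite <- Rinv_1; apply Rinv_le_contravar]; lra).
  destruct (INR_unbounded (/ c)) as [N HN].
  set (th := b ^ N).
  assert (Hth : 0 < th <= 1)
    by (split; [apply pow_lt | rewrite <- (pow1 N); apply pow_incr]; lra).
  destruct (proj2 (proj2 Hlam) (L * th) ltac:(nra)) as [M HM].
  assert (HthM : 0 < th ^ M) by (apply pow_lt; lra).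
  destruct (pow_lt_1_zero (/ 2) ltac:(rewrite Rabs_pos_eq; lra) _ HthM) as [d2 Hd2].
  exists (/ 2), (Nat.max d0 d2); split; [lra|].
  intros d k Hd Hk; set (a := card_I I d).
  assert (Hda : (d <= N * a)%nat).
  { apply INR_le; rewrite mult_INR; specialize (Hcard d ltac:(lia)).
    assert (1 < INR N * c) by (apply (Rmult_lt_compat_r c) in HN; [rewrite Rinv_l in HN|]; lra).
    pose proof (pos_INR d); pose proof (pos_INR N); fold a in Hcard; nra. }
  apply Rle_trans with (L ^ d * th ^ (a - M)).
  - pose proof Hk as [Hlen [Hpos _]]; rewrite <- Hlen.
    apply Rle_trans with (L ^ length k * th ^ length (filter (Nat.leb M) k)).
    + apply lam_prod_le_split; [lra| |].
      * intros m Hm; split; [|eapply Rle_trans; [|apply Rmax_r]];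
          apply eigen_range; auto.
      * intros m _ HMm; left; apply HM, HMm.
    + apply Rmult_le_compat_l; [apply pow_le; lra|].
      apply pow_le_antimono; [lra|]; apply many_large_entries, Hk.
  - apply (absorb_loss L b); [lra | unfold b; field; lra | exact Hth | |].
    + unfold th; rewrite <- pow_mult; apply pow_le_antimono; [lra | exact Hda].
    + specialize (Hd2 d ltac:(lia)); rewrite Rabs_pos_eq in Hd2 by (apply pow_le; lra).
      exact Hd2.
Qed.

(** Summability and decay together give strong polynomial tractability. *)

Lemma exp_monotone (x y : R) : x <= y -> exp x <= exp y.
Proof. intros [Hlt| ->]; [left; apply exp_increasing, Hlt | right; reflexivity]. Qed.

Lemma ln_nonpos (x : R) : 0 < x <= 1 -> ln x <= 0.
Proof.
  intros [Hx [Hlt| ->]]; [left; rewrite <- ln_1; apply ln_increasing; lra | rewrite ln_1; lra].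
Qed.

Lemma ln_nonneg (x : R) : 1 <= x -> 0 <= ln x.
Proof.
  intros [Hlt| <-]; [left; rewrite <- ln_1; apply ln_increasing; lra | rewrite ln_1; lra].
Qed.

Lemma pow_le_rpow_nn (x tau : R) (n : nat) :
  0 <= x <= 1 -> (1 <= n)%nat -> tau <= INR n -> x ^ n <= rpow_nn x tau.
Proof.
  intros Hx Hn Htau; unfold rpow_nn; destruct (Rle_dec x 0) as [Hle|Hgt].
  - replace x with 0 by lra; rewrite pow_i by lia; lra.
  - apply Rnot_le_lt in Hgt; rewrite <- Rpower_pow by exact Hgt.
    unfold Rpower; apply exp_monotone.
    pose proof (ln_nonpos x ltac:(lra)); nra.
Qed.

Lemma summable_integer_power (lam : nat -> R) (tau : R) :
  eigen_seq lam -> in_ell lam tau ->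
  exists n S, (1 <= n)%nat /\ 1 <= S /\
    forall B, sumL (fun m => lam m ^ n) (seq 1 B) <= S.
Proof.
  intros Hlam [s Hs]; destruct Hlam as [Hnn [_ Hlim]].
  set (g := fun m => rpow_nn (lam m) tau).
  assert (Hpart : forall n, sum_f_R0 (fun j => g (S j)) n <= s).
  { apply growing_ineq; [|exact Hs]; intros n; rewrite tech5.
    pose proof (rpow_nn_nonneg (lam (S (S n))) tau); unfold g at 3; lra. }
  assert (Hs0 : 0 <= s)
    by (specialize (Hpart O); pose proof (rpow_nn_nonneg (lam 1%nat) tau);
        simpl in Hpart; unfold g in Hpart; lra).
  assert (Hg : forall B, sumL g (seq 1 B) <= s)
    by (intros [|B]; [simpl; lra | rewrite sumL_seq_partial_sum; apply Hpart]).
  destruct (INR_unbounded tau) as [n0 Hn0].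
  destruct (Hlim 1 ltac:(lra)) as [M HM].
  set (f := fun m => lam m ^ S n0).
  assert (Hf0 : 0 <= sumL f (seq 1 (S M)))
    by (apply sumL_nonneg; intros m Hm; apply pow_le, Hnn; apply in_seq in Hm; lia).
  exists (S n0), (sumL f (seq 1 (S M)) + s + 1); split; [lia | split; [lra|]].
  intros B; apply Rle_trans with (sumL f (seq 1 (S M)) + sumL g (seq 1 B));
    [|specialize (Hg B); lra].
  apply sumL_seq_eventual_le.
  - intros m Hm; apply pow_le, Hnn, Hm.
  - intros m; apply rpow_nn_nonneg.
  - intros m Hm; apply pow_le_rpow_nn; [|lia|rewrite S_INR; lra].
    split; [apply Hnn; lia | left; apply HM; lia].
Qed.

Lemma dimension_factor_bound (S rho eps : R) (d1 d : nat) :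
  1 <= S -> 0 < rho < 1 -> 0 < eps <= 1 -> ((d1 <= d)%nat -> eps ^ 2 < rho ^ d) ->
  S ^ d <= S ^ d1 * Rpower eps (- (2 * ln S / - ln rho)).
Proof.
  intros HS Hrho Heps Hdecay; set (q := 2 * ln S / - ln rho).
  assert (Hlnrho : ln rho < 0) by (rewrite <- ln_1; apply ln_increasing; lra).
  assert (HlnS := ln_nonneg S HS).
  assert (Hlneps := ln_nonpos eps Heps).
  assert (Hq : 0 <= q) by (unfold q; apply Rmult_le_pos; [lra | left; apply Rinv_0_lt_compat; lra]).
  assert (Hcost : 1 <= Rpower eps (- q))
    by (unfold Rpower; rewrite <- exp_0; apply exp_monotone; nra).
  assert (HSd1 : 1 <= S ^ d1) by (rewrite <- (pow1 d1); apply pow_incr; lra).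
  destruct (Compare_dec.le_lt_dec d1 d) as [Hle|Hlt].
  - assert (Hd : INR d * ln rho > 2 * ln eps).
    { specialize (Hdecay Hle); apply ln_increasing in Hdecay; [|apply pow_lt; lra].
      rewrite !ln_pow in Hdecay by lra; simpl in Hdecay; lra. }
    assert (S ^ d <= Rpower eps (- q)).
    { rewrite <- Rpower_pow by lra; unfold Rpower; apply exp_monotone.
      replace (- q * ln eps) with ((2 * ln eps / ln rho) * ln S) by (unfold q; field; lra).
      apply Rmult_le_compat_r; [exact HlnS|].
      apply (Rmult_le_reg_r (- ln rho)); [lra|].
      replace (2 * ln eps / ln rho * - ln rho) with (- (2 * ln eps)) by (field; lra); nra. }
    nra.
  - assert (S ^ d <= S ^ d1) by (apply Rle_pow; [exact HS | lia]).
    nra.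
Qed.

(* Main estimate: n(eps,d) <= S^d1 * eps^(-(2n+q)) with n, S from
   summable_integer_power and q from dimension_factor_bound. *)
Lemma strongly_tractable_of_summable_decay (lam : nat -> R) (I : nat -> nat -> bool) :
  eigen_seq lam -> (exists tau, 0 < tau /\ in_ell lam tau) -> exp_decay lam I ->
  strongly_poly_tractable lam I.
Proof.
  intros Hlam [tau [_ Hell]] [rho [d1 [Hrho Hdecay]]].
  destruct (summable_integer_power lam tau Hlam Hell) as [n [S [Hn [HS1 HS]]]].
  set (q := 2 * ln S / - ln rho).
  assert (Hn0 : 1 <= INR n) by (apply (le_INR 1); exact Hn).
  assert (Hq : 0 <= q).
  { assert (ln rho < 0) by (rewrite <- ln_1; apply ln_increasing; lra).
    apply Rmult_le_pos; [pose proof (ln_nonneg S HS1); lra|].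
    left; apply Rinv_0_lt_compat; lra. }
  exists (S ^ d1), (2 * INR n + q); split; [apply pow_lt; lra | split; [lra|]].
  intros d eps Hd Heps l Hnd Hl; destruct l as [|k0 l'].
  { simpl; apply Rmult_le_pos; [apply pow_le; lra | unfold Rpower; left; apply exp_pos]. }
  assert (Hcount : INR (length (k0 :: l')) * (eps ^ 2) ^ n <= S ^ d).
  { apply (count_by_moment lam n S eps d); [apply (proj1 Hlam) | exact HS | lra | exact Hnd|].
    intros k Hk; destruct (Hl k Hk) as [Hk' Hgt].
    split; [apply (nablaA_multi_index I), Hk' | exact Hgt]. }
  assert (Hdim : S ^ d <= S ^ d1 * Rpower eps (- q)).
  { apply dimension_factor_bound; [exact HS1 | exact Hrho | exact Heps|].
    intros Hd1; destruct (Hl k0 (or_introl eq_refl)) as [Hk0 Hgt].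
    specialize (Hdecay d k0 Hd1 Hk0); lra. }
  assert (Hmom : 0 < (eps ^ 2) ^ n) by (apply pow_lt, pow_lt; lra).
  assert (Hsplit : Rpower eps (- (2 * INR n + q)) = / (eps ^ 2) ^ n * Rpower eps (- q)).
  { rewrite Ropp_plus_distr, Rpower_plus, Rpower_Ropp, <- pow_mult, <- Rpower_pow by lra.
    do 3 f_equal; rewrite mult_INR; simpl; ring. }
  rewrite Hsplit; apply (Rmult_le_reg_r ((eps ^ 2) ^ n)); [exact Hmom|].
  replace (S ^ d1 * (/ (eps ^ 2) ^ n * Rpower eps (- q)) * (eps ^ 2) ^ n)
    with (S ^ d1 * Rpower eps (- q)) by (field; lra).
  lra.
Qed.

Lemma poly_tractable_of_strongly (lam : nat -> R) (I : nat -> nat -> bool) :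
  strongly_poly_tractable lam I -> poly_tractable lam I.
Proof.
  intros [C [p [HC [Hp H]]]]; exists C, p, 0; repeat split; [exact HC | exact Hp | lra|].
  intros d eps Hd Heps; rewrite Rpower_O, Rmult_1_r by (apply lt_0_INR; lia).
  apply H; assumption.
Qed.

Lemma summable_of_poly_tractable (lam : nat -> R) (I : nat -> nat -> bool) :
  eigen_seq lam -> poly_tractable lam I -> exists tau, 0 < tau /\ in_ell lam tau.
Proof.
  intros Hlam [C [p [q [_ [Hp [_ H]]]]]]; exists p; split; [exact Hp|].
  apply (summable_of_d1_bound lam I C p Hlam); intros eps Heps.
  specialize (H 1%nat eps (le_n 1) Heps).
  replace (Rpower (INR 1) q) with 1 in H
    by (simpl; unfold Rpower; rewrite ln_1, Rmult_0_r, exp_0; reflexivity).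
  rewrite Rmult_1_r in H; exact H.
Qed.

Lemma tractability_equivalences (lam : nat -> R) (I : nat -> nat -> bool) :
  eigen_seq lam -> exp_decay lam I ->
  (strongly_poly_tractable lam I <-> poly_tractable lam I) /\
  (poly_tractable lam I <-> exists tau, 0 < tau /\ in_ell lam tau).
Proof.
  intros Hlam Hdecay.
  assert (Hsum_spt := strongly_tractable_of_summable_decay lam I Hlam).
  split; split.
  - apply poly_tractable_of_strongly.
  - intros Hpt; apply Hsum_spt; [apply (summable_of_poly_tractable lam I Hlam Hpt) | exact Hdecay].
  - apply summable_of_poly_tractable, Hlam.
  - intros Hell; apply poly_tractable_of_strongly, Hsum_spt; assumption.
Qed.

Theorem theorem4 (lam : nat -> R) (I : nat -> nat -> bool)
  (Hlam : eigen_seq lam) (HI : index_family I)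
  (Hlam2 : 0 < lam 2%nat) (Hinit : init_error_pos lam I) :
  (lam 1%nat < 1 ->
     (strongly_poly_tractable lam I <-> poly_tractable lam I) /\
     (poly_tractable lam I <-> exists tau, 0 < tau /\ in_ell lam tau)) /\
  (1 <= lam 1%nat ->
   (exists c d0, 0 < c /\ forall d, (d0 <= d)%nat -> c * INR d <= INR (card_I I d)) ->
     (strongly_poly_tractable lam I <-> poly_tractable lam I) /\
     (poly_tractable lam I <-> exists tau, 0 < tau /\ in_ell lam tau)).
Proof.
  split.
  - intros Hsmall; apply (tractability_equivalences lam I Hlam).
    apply decay_of_small_first; assumption.
  - intros _ Hlinear; apply (tractability_equivalences lam I Hlam).
    apply decay_of_linear_card; assumption.
Qed.
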